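(* Let $n\ge1$ and let $\rho:\mathsf{Ch}_n\to\mathcal M_N(\mathbb T)$ be a representation of $\mathsf{Ch}_n=\langle a_1,\dots,a_n\rangle$. For every $\ell\in\{1,\dots,n\}$, the assignment on generators of $\mathsf{Ch}_{n+1}=\langle a_1,\dots,a_{n+1}\rangle$ $$\rho_\ell(a_j)=\begin{cases}\rho(a_j)& \text{if } j\le \ell,\\ \rho(a_{j-1})&\text{otherwise},\end{cases}\qquad j=1,\dots,n+1,$$ extends to a well-defined representation $\rho_\ell:\mathsf{Ch}_{n+1}\to\mathcal M_N(\mathbb T)$.
   Context: The Chinese monoid of rank $m$ is the monoid $\mathsf{Ch}_m=\langle a_1,\dots,a_m\rangle$ presented by the relations $a_ja_ka_i=a_ka_ja_i=a_ka_ia_j$ for all $1\le i\le j\le k\le m$. $\mathbb T=\mathbb R\cup\{-\infty\}$ is the max-plus semiring (addition $\max$, multiplication $+$), and $\mathcal M_N(\mathbb T)$ the monoid of $N\times N$ matrices over it with the induced product. A representation of a monoid $\mathcal S$ is a monoid homomorphism $\mathcal S\to\mathcal M_N(\mathbb T)$. *)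

From HB Require Import structures.
From mathcomp Require Import all_boot all_order all_algebra.
From mathcomp Require Import reals.
Set Implicit Arguments. Unset Strict Implicit. Unset Printing Implicit Defensive.
Import Order.TTheory GRing.Theory Num.Theory.
Local Open Scope ring_scope.

Section Trop.
Variable R : realType.

(* The max-plus semiring T = R ∪ {-oo}; None encodes -oo. *)
Definition trop := option R.

Definition tadd (a b : trop) : trop :=
  match a, b with
  | None, x => x
  | x, None => x
  | Some x, Some y => Some (Num.max x y)
  end.

Definition tmul (a b : trop) : trop :=
  match a, b with
  | Some x, Some y => Some (x + y)
  | _, _ => None
  end.

Definition tmat (N : nat) := 'M[trop]_N.

Definition tmx_mul (N : nat) (A B : tmat N) : tmat N :=
  \matrix_(i, j) \big[tadd/None]_(k < N) tmul (A i k) (B k j).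

Definition tmx_id (N : nat) : tmat N :=
  \matrix_(i, j) (if i == j then Some 0 else None).

End Trop.

(* Chinese monoid Ch_m: words over generators a_1..a_m (encoded by 'I_m,
   a_(i+1) <-> ordinal i) modulo the congruence generated by
   a_j a_k a_i = a_k a_j a_i = a_k a_i a_j for i <= j <= k. *)
Inductive ch_rel (m : nat) : seq 'I_m -> seq 'I_m -> Prop :=
  | ch_rel1 (i j k : 'I_m) : (i <= j)%N -> (j <= k)%N ->
      ch_rel [:: j; k; i] [:: k; j; i]
  | ch_rel2 (i j k : 'I_m) : (i <= j)%N -> (j <= k)%N ->
      ch_rel [:: k; j; i] [:: k; i; j].

Inductive ch_cong (m : nat) : seq 'I_m -> seq 'I_m -> Prop :=
  | ch_step (u v l r : seq 'I_m) : ch_rel l r ->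
      ch_cong (u ++ l ++ v) (u ++ r ++ v)
  | ch_refl (w : seq 'I_m) : ch_cong w w
  | ch_sym (w1 w2 : seq 'I_m) : ch_cong w1 w2 -> ch_cong w2 w1
  | ch_trans (w1 w2 w3 : seq 'I_m) :
      ch_cong w1 w2 -> ch_cong w2 w3 -> ch_cong w1 w3.

(* A representation Ch_m -> M_N(T), given as a function on words that is a
   monoid homomorphism from the free monoid and is constant on ch_cong
   classes (i.e. factors through Ch_m). *)
Definition is_ch_rep (R : realType) (m N : nat)
    (rho : seq 'I_m -> tmat R N) : Prop :=
  [/\ rho [::] = tmx_id R N,
      forall u v, rho (u ++ v) = tmx_mul (rho u) (rho v)
    & forall u v, ch_cong u v -> rho u = rho v].

(* Index map for rho_l: generator j (1-based, of Ch_(n+1)) goes to j if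
   j <= l, and to j-1 otherwise.  In 0-based ordinals with l : 'I_n
   standing for l+1: j <= l  |->  j,  else j-1. *)
Definition ch_shrink (n : nat) (l : 'I_n) (j : 'I_n.+1) : 'I_n :=
  insubd l (if (j <= l)%N then val j else (val j).-1).

From mathcomp Require Import all_boot all_order all_algebra.
From mathcomp Require Import reals.
From mathcomp Require Import zify.

(* The defining relations of the Chinese monoid only compare generators with
   [<=], so every monotone map of generators induces a monoid morphism
   [Ch_m -> Ch_n]; [rho_l] is [rho] composed with the morphism induced by the
   monotone surjection [ch_shrink l]. *)

Lemma ch_shrinkE (n : nat) (l : 'I_n) (j : 'I_n.+1) :
  ch_shrink l j = (if (j <= l)%N then j : nat else j.-1) :> nat.
Proof.
rewrite /ch_shrink insubdK // unfold_in /=.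
have := ltn_ord j; have := ltn_ord l; case: ifP => /=; lia.
Qed.

Lemma ch_shrink_homo (n : nat) (l : 'I_n) :
  {homo ch_shrink l : a b / (a <= b)%N}.
Proof.
move=> a b le_ab; rewrite !ch_shrinkE.
by case: ifP => a_l; case: ifP => b_l; lia.
Qed.

Section MonotoneMorphism.

Variables (m n : nat) (f : 'I_m -> 'I_n).
Hypothesis f_homo : {homo f : a b / (a <= b)%N}.

Lemma ch_rel_map (u v : seq 'I_m) :
  ch_rel u v -> ch_rel (map f u) (map f v).
Proof.
by case=> i j k le_ij le_jk; [apply: ch_rel1 | apply: ch_rel2]; apply: f_homo.
Qed.

Lemma ch_cong_map (u v : seq 'I_m) :
  ch_cong u v -> ch_cong (map f u) (map f v).
Proof.
elim=> {u v} [u v l r /ch_rel_map uv | w | w1 w2 _ | w1 w2 w3 _ h12 _ h23].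
- by rewrite !map_cat; apply: ch_step.
- exact: ch_refl.
- exact: ch_sym.
- exact: ch_trans h12 h23.
Qed.

Lemma is_ch_rep_comp (R : realType) (N : nat) (rho : seq 'I_n -> tmat R N) :
  is_ch_rep rho -> is_ch_rep (fun w => rho (map f w)).
Proof.
case=> rho1 rhoM rho_cong; split=> // [u v | u v /ch_cong_map uv].
- by rewrite map_cat rhoM.
- exact: rho_cong.
Qed.

End MonotoneMorphism.

Theorem lemma1p1 (R : realType) (n N : nat) (rho : seq 'I_n -> tmat R N) :
  (0 < n)%N -> is_ch_rep rho ->
  forall l : 'I_n,
  exists rho_l : seq 'I_n.+1 -> tmat R N,
    is_ch_rep rho_l /\
    forall j : 'I_n.+1, rho_l [:: j] = rho [:: ch_shrink l j].
Proof.
move=> _ rho_rep l; exists (fun w => rho (map (ch_shrink l) w)).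
by split=> //; apply: is_ch_rep_comp => //; apply: ch_shrink_homo.
Qed.
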